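(* Let $0<\phi\le1$, let $\mathcal{Q}=\{P_1,\dots,P_k\}$ be a set of polygons and $w_i=\phi\cdot d(P_i)$. Let $P_{\min}=P_j\in\mathcal{Q}$ be a polygon minimizing $|P_j^+(w_j/2)|$ and write $P^+_{\min}(w/2)=P_j^+(w_j/2)$; let $d_{\min}=\min_{P_i\in\mathcal{Q}}d(P_i)$. Let $\cap\mathcal{Q}^-(w)=\bigcap_i P_i^-(w_i)$ and $\cap\mathcal{Q}^+(w/2)=\bigcap_i P_i^+(w_i/2)$. If $\cap\mathcal{Q}^-(w)\neq\emptyset$ and $\phi\cdot d_{\min}>\sqrt8$, then $$\frac{\phi^2}{2}\cdot|P^+_{\min}(w/2)|\le|\cap\mathcal{Q}^+(w/2)|\le|P^+_{\min}(w/2)|.$$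
   Context: $d(P)$ is the diameter of $P$. For a polygon $P$ and $r\ge0$, $P^+(r)$ is the set of points at distance at most $r$ from some point of $P$, and $P^-(r)$ is the set of points of $P$ at distance at least $r$ from every point outside $P$. $|X|$ denotes the number of points of $\mathbb{Z}^2$ in the region $X$. *)

From HB Require Import structures.
From mathcomp Require Import all_boot all_order all_algebra.
From mathcomp Require Import all_classical all_reals all_analysis.
From mathcomp Require Import finmap.
Set Implicit Arguments. Unset Strict Implicit. Unset Printing Implicit Defensive.
Import Order.TTheory GRing.Theory Num.Theory numFieldNormedType.Exports.
Local Open Scope classical_set_scope.
Local Open Scope ring_scope.

Section Plane.
Variable R : realType.
Notation pt := (R * R)%type.

Definition dist (x y : pt) : R :=
  Num.sqrt ((x.1 - y.1) ^+ 2 + (x.2 - y.2) ^+ 2).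

Definition segment (a b : pt) : set pt :=
  [set p | exists t : R, 0 <= t <= 1 /\
     p = (a.1 + t * (b.1 - a.1), a.2 + t * (b.2 - a.2))].

Definition bounded2 (S : set pt) : Prop :=
  exists M : R, forall y, S y -> `|y.1| <= M /\ `|y.2| <= M.

Definition edge (v : seq pt) (i : nat) : set pt :=
  segment (nth (0,0) v i) (nth (0,0) v ((i.+1) %% size v)%N).

Definition simple_chain (v : seq pt) : Prop :=
  (3 <= size v)%N /\ uniq v /\
  forall i j, (i < size v)%N -> (j < size v)%N -> i <> j ->
    (j = ((i.+1) %% size v)%N ->
       edge v i `&` edge v j = [set nth (0,0) v j]) /\
    (j <> ((i.+1) %% size v)%N -> i <> ((j.+1) %% size v)%N ->
       edge v i `&` edge v j = set0).

Definition boundary_chain (v : seq pt) : set pt :=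
  \bigcup_(i in [set i | (i < size v)%N]) edge v i.

Definition polygon_of (v : seq pt) : set pt :=
  [set x | boundary_chain v x \/
     (~ boundary_chain v x /\
      bounded2 (connected_component (~` boundary_chain v) x))].

Definition is_polygon (P : set pt) : Prop :=
  exists v : seq pt, simple_chain v /\ P = polygon_of v.

Definition diam (P : set pt) : R :=
  sup [set r | exists x y, P x /\ P y /\ r = dist x y].

Definition offset_plus (P : set pt) (r : R) : set pt :=
  [set x | exists y, P y /\ dist x y <= r].

Definition offset_minus (P : set pt) (r : R) : set pt :=
  [set x | P x /\ forall y, ~ P y -> r <= dist x y].

(* |X| : number of points of Z^2 in X (all sets considered are bounded,
   hence contain finitely many lattice points) *)
Definition lattice_count (X : set pt) : nat :=
  (#|` fset_set [set z : int * int | X ((z.1)%:~R, (z.2)%:~R)] |)%fset.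

End Plane.

Set Warnings "-notation-overridden,-ambiguous-paths,-notation-incompatible-prefix".
From HB Require Import structures.
From mathcomp Require Import all_boot all_order all_algebra.
From mathcomp Require Import all_classical all_reals all_analysis.
From mathcomp Require Import finmap.
From mathcomp Require Import ring lra.
Import Order.TTheory GRing.Theory Num.Theory numFieldNormedType.Exports.
Local Open Scope classical_set_scope.
Local Open Scope ring_scope.
Set Implicit Arguments. Unset Strict Implicit.

(* Let [c] be a common point of the [P_i^-(w_i)]. The disk of radius [w_i] about
   [c] lies in [P_i], which forces all of [P_i] within [d(P_i) - w_i] of [c]; so
   [P_i^+(w_i/2)] lies in the square of half-side [d(P_i) - w_i/2] about [c] and
   has at most [(2 d(P_i) - w_i + 1)^2] lattice points. Conversely every point
   within [3 w_i / 2] of [c] is within [w_i / 2] of [P_i], so the square of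
   half-side [21/20 phi d_min] about [c] lies in every [P_i^+(w_i/2)], and the
   intersection has at least [(21/10 phi d_min - 1)^2] lattice points. For the
   polygon of minimal diameter the two squares compare with ratio [phi^2/2] as
   soon as [phi d_min > 14/5]. *)

Section Distance.
Variable R : realType.
Notation pt := (R * R)%type.

Lemma dist_sym (a b : pt) : dist a b = dist b a.
Proof. by rewrite /dist -(sqrrN (a.1 - b.1)) -(sqrrN (a.2 - b.2)) !opprB. Qed.

Lemma dist_scale (a b u v : pt) (s : R) :
  a.1 - b.1 = s * (u.1 - v.1) -> a.2 - b.2 = s * (u.2 - v.2) ->
  dist a b = `|s| * dist u v.
Proof.
rewrite /dist => -> ->; rewrite !exprMn -mulrDr sqrtrM ?sqr_ge0 //.
by rewrite sqrtr_sqr.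
Qed.

Lemma normB1_le_dist (a b : pt) : `|a.1 - b.1| <= dist a b.
Proof. by rewrite /dist -sqrtr_sqr ler_wsqrtr // lerDl sqr_ge0. Qed.

Lemma normB2_le_dist (a b : pt) : `|a.2 - b.2| <= dist a b.
Proof. by rewrite /dist -sqrtr_sqr ler_wsqrtr // lerDr sqr_ge0. Qed.

Lemma normB_le_dist_path (z y c : pt) :
  `|z.1 - c.1| <= dist z y + dist y c /\ `|z.2 - c.2| <= dist z y + dist y c.
Proof.
rewrite -(subrKA y.1 z.1) -(subrKA y.2 z.2).
split; apply: (le_trans (ler_normD _ _)); apply: lerD;
  by rewrite ?normB1_le_dist ?normB2_le_dist.
Qed.

Lemma dist_lt_of_square (a b : pt) (h r : R) : 0 < r ->
  `|a.1 - b.1| <= h -> `|a.2 - b.2| <= h -> 2 * h ^+ 2 < r ^+ 2 ->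
  dist a b < r.
Proof.
rewrite !ler_norml => r0 /andP[a1 a1'] /andP[a2 a2'] hr.
rewrite /dist -(ger0_norm (ltW r0)) -sqrtr_sqr ltr_sqrt ?exprn_gt0 //.
nra.
Qed.

End Distance.

Section Offsets.
Variable R : realType.
Notation pt := (R * R)%type.
Implicit Types (P : set pt) (c y z : pt) (w : R).

Lemma offset_minus_ball P w c y : offset_minus P w c -> dist c y < w -> P y.
Proof. by case=> _ hc cy; apply: contrapT => /hc; rewrite leNgt cy. Qed.

Lemma offset_minus_sub P w c : offset_minus P w c -> P c.
Proof. by case. Qed.

(* The witness is the point at distance [w/2] from [z] on the segment [c,z]. *)
Lemma offset_plus_near P w c z : 0 < w -> offset_minus P w c ->
  dist z c < 3 * w / 2 -> offset_plus P (w / 2) z.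
Proof.
move=> w0 Pwc zc; have [zc'|zc'] := lerP (dist z c) (w / 2).
  by exists c; split=> //; apply: offset_minus_sub Pwc.
set D := dist z c in zc zc'.
have D0 : 0 < D by apply: lt_trans zc'; lra.
pose t := (D - w / 2) / D.
have t0 : 0 <= t by rewrite divr_ge0 //; lra.
have t1 : t <= 1 by rewrite ler_pdivrMr // mul1r; lra.
have tD : t * D = D - w / 2 by rewrite divfK ?gt_eqF.
pose y : pt := (c.1 + t * (z.1 - c.1), c.2 + t * (z.2 - c.2)).
exists y; split.
  apply: (offset_minus_ball Pwc).
  rewrite dist_sym (@dist_scale _ y c z c t) /=; [|ring|ring].
  by rewrite ger0_norm // -/D tD; lra.
rewrite (@dist_scale _ z y z c (1 - t)) /=; [|ring|ring].
by rewrite ger0_norm ?subr_ge0 // -/D mulrBl mul1r tD; lra.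
Qed.

Lemma dist_le_diam P y z : 0 < diam P -> P y -> P z -> dist y z <= diam P.
Proof.
move=> d0 Py Pz.
have [hs|hs] := pselect (has_sup [set r | exists y z, P y /\ P z /\ r = dist y z]).
  by apply: (sup_upper_bound hs); exists y, z.
by move: d0; rewrite /diam sup_out // ltxx.
Qed.

(* Otherwise the point [q] beyond [c] on the ray from [y], at distance
   [(w + diam P - dist c y) / 2 < w] from [c], lies in [P] but is farther than
   [diam P] from [y]. *)
Lemma offset_minus_dist_le P w c y : 0 < w <= diam P -> offset_minus P w c ->
  P y -> dist c y <= diam P - w.
Proof.
move=> /andP[w0 wd] Pwc Py; rewrite leNgt; apply/negP => cy.
set D := dist c y in cy *; set d := diam P in wd cy *.
have D0 : 0 < D by apply: le_lt_trans cy; lra.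
have Dd : D <= d := dist_le_diam (lt_le_trans w0 wd) (offset_minus_sub Pwc) Py.
pose t := (w + d - D) / (2 * D).
have tD : t * D = (w + d - D) / 2 by rewrite /t; field; rewrite gt_eqF.
have t0 : 0 <= t by rewrite divr_ge0 ?mulr_ge0 //; lra.
pose q : pt := (c.1 + t * (c.1 - y.1), c.2 + t * (c.2 - y.2)).
have Pq : P q.
  apply: (offset_minus_ball Pwc).
  rewrite dist_sym (@dist_scale _ q c c y t) /=; [|ring|ring].
  by rewrite ger0_norm // tD; lra.
have := dist_le_diam (lt_le_trans w0 wd) Pq Py.
rewrite (@dist_scale _ q y c y (1 + t)) /=; [|ring|ring].
by rewrite ger0_norm ?addr_ge0 // mulrDl mul1r tD -/D -/d; lra.
Qed.

Lemma offset_plus_sub_square P w c z : 0 < w <= diam P -> offset_minus P w c ->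
  offset_plus P (w / 2) z ->
  `|z.1 - c.1| <= diam P - w / 2 /\ `|z.2 - c.2| <= diam P - w / 2.
Proof.
move=> wP Pwc [y [Py zy]].
have cy := offset_minus_dist_le wP Pwc Py; rewrite dist_sym in cy.
have [h1 h2] := normB_le_dist_path z y c.
by split; [apply: le_trans h1 _ | apply: le_trans h2 _]; lra.
Qed.

End Offsets.

Section LatticeCount.
Variable R : realType.
Notation pt := (R * R)%type.

Definition lattice_points (X : set pt) : set (int * int) :=
  [set z | X (z.1%:~R, z.2%:~R)].

Lemma lattice_countE (X : set pt) :
  lattice_count X = #|` fset_set (lattice_points X)|%fset.
Proof. by []. Qed.

Lemma lattice_count_le_subset (X Y : set pt) :
  finite_set (lattice_points Y) -> X `<=` Y ->
  (lattice_count X <= lattice_count Y)%N.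
Proof.
move=> finY XY; rewrite !lattice_countE; apply: fsubset_leq_card.
have finX : finite_set (lattice_points X) by apply: sub_finite_set finY => z /XY.
by rewrite -fset_set_sub // => z /XY.
Qed.

Lemma ceil_addn_near (x h : R) (a : nat) : 0 <= h ->
  (a < Num.truncn (2 * h))%N -> `|(Num.ceil (x - h) + a%:Z)%:~R - x| <= h.
Proof.
move=> h0 ha.
have lo := ceil_ge (x - h); have hi := ceilB1_lt (x - h).
have a2h : a.+1%:R <= 2 * h by rewrite -truncn_ge_nat // mulr_ge0.
rewrite -natr1 in a2h; rewrite intrD -[_ (- 1)]/(-1) in hi.
have a0 : 0 <= a%:R :> R := ler0n _ _.
by rewrite intrD -pmulrn ler_norml; apply/andP; split; lra.
Qed.

Lemma near_eq_ceil_addn (x r : R) (z : int) : 0 <= r -> `|z%:~R - x| <= r ->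
  exists2 a : nat, (a < (Num.truncn (2 * r)).+1)%N & z = Num.ceil (x - r) + a%:Z.
Proof.
rewrite ler_norml => r0 /andP[zlo zhi].
set lo := Num.ceil (x - r).
have lo_z : 0 <= z - lo by rewrite subr_ge0 ceil_le_int; lra.
have lo_ge : x - r <= lo%:~R := ceil_ge _.
exists `|z - lo|%N; last by rewrite gez0_abs //; ring.
rewrite ltnS truncn_ge_nat ?mulr_ge0 // -[X in X%:R]/(`|z - lo|%N).
by rewrite pmulrn gez0_abs // intrB; lra.
Qed.

Lemma lattice_count_square_ge (X : set pt) (c : pt) (h : R) : 0 <= h ->
  finite_set (lattice_points X) ->
  (forall p : pt, `|p.1 - c.1| <= h -> `|p.2 - c.2| <= h -> X p) ->
  (Num.truncn (2 * h) ^ 2 <= lattice_count X)%N.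
Proof.
move=> h0 finX sqX; set n := Num.truncn (2 * h).
pose g k : int * int := (Num.ceil (c.1 - h) + (k %/ n)%N%:Z,
                         Num.ceil (c.2 - h) + (k %% n)%N%:Z).
have ginj : {in `I_(n ^ 2) &, injective g}.
  move=> k k' _ _ [] /addrI [] e1 /addrI [] e2.
  by rewrite (divn_eq k n) (divn_eq k' n) e1 e2.
have gX : g @` `I_(n ^ 2) `<=` lattice_points X.
  move=> _ [k /= kn <-]; have n0 : (0 < n)%N.
    by move: kn; rewrite lt0n; apply: contraTneq => ->.
  by apply: sqX; apply: ceil_addn_near;
    rewrite ?ltn_divLR ?ltn_pmod // mulnn.
rewrite lattice_countE; apply: leq_card_fset_set => //.
apply: card_le_trans (subset_card_le gX).
by have /card_eqPle[] := card_esym (inj_card_eq ginj).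
Qed.

Lemma lattice_count_square_le (X : set pt) (c : pt) (r : R) : 0 <= r ->
  (forall p, X p -> `|p.1 - c.1| <= r /\ `|p.2 - c.2| <= r) ->
  finite_set (lattice_points X) /\
  (lattice_count X <= (Num.truncn (2 * r)).+1 ^ 2)%N.
Proof.
move=> r0 Xsq; set m := (Num.truncn (2 * r)).+1.
pose f k : int * int := (Num.ceil (c.1 - r) + (k %/ m)%N%:Z,
                         Num.ceil (c.2 - r) + (k %% m)%N%:Z).
have Xf : lattice_points X `<=` f @` `I_(m ^ 2).
  move=> [z1 z2] /Xsq [/= /(near_eq_ceil_addn r0) [a am ->]
                        /(near_eq_ceil_addn r0) [b bm ->]].
  exists (a * m + b)%N.
    rewrite /= (leq_trans (_ : _ < a * m + m)%N) ?ltn_add2l //.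
    by rewrite -mulSnr -mulnn leq_mul2r am orbT.
  by rewrite /f /= divnMDl ?modnMDl ?divn_small ?modn_small ?addn0.
have Xle : (lattice_points X #<= `I_(m ^ 2))%card.
  exact: card_le_trans (subset_card_le Xf) (card_image_le _ _).
split; first exact: card_le_finite Xle (finite_II _).
exact: geq_card_fset_set.
Qed.

End LatticeCount.

Lemma sqrt8_gt (R : realType) : 14 / 5 < Num.sqrt 8 :> R.
Proof.
have -> : 14 / 5 = Num.sqrt ((14 / 5) ^+ 2) :> R by rewrite sqrtr_sqr ger0_norm.
by rewrite ltr_sqrt //; lra.
Qed.

Lemma ratio_of_square_bounds (R : realType) (phi d : R) (p q : nat) :
  0 < phi <= 1 -> 14 / 5 < phi * d ->
  (p <= (Num.truncn (2 * (d - phi * d / 2))).+1 ^ 2)%N ->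
  (Num.truncn (2 * (21 / 20 * (phi * d))) ^ 2 <= q)%N ->
  phi ^+ 2 / 2 * p%:R <= q%:R.
Proof.
move=> /andP[phi0 phi1] x_gt; set M := (Num.truncn _).+1; set N := Num.truncn _.
rewrite -!(ler_nat R) !natrX => p_le q_ge.
have d0 : 0 < d by rewrite -(pmulr_rgt0 _ phi0); lra.
have M_le : M%:R <= 2 * (d - phi * d / 2) + 1.
  by rewrite /M -natr1 lerD2r truncn_le mulr_ge0 //; nra.
have N_gt : 21 / 10 * (phi * d) - 1 < N%:R.
  by have := truncnS_gt (2 * (21 / 20 * (phi * d))); rewrite -natr1 -/N; lra.
(* [phi M <= 2 phi d <= 7/5 N] and [(7/5)^2 <= 2]. *)
have phiM : phi * M%:R <= 7 / 5 * N%:R by nra.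
have : (phi * M%:R) ^+ 2 <= (7 / 5 * N%:R) ^+ 2.
  by rewrite ler_pXn2r ?nnegrE ?mulr_ge0 //; lra.
have p0 : 0 <= p%:R :> R := ler0n _ _.
rewrite !exprMn; nra.
Qed.

Lemma bigmin_attained d (T : orderType d) (I : finType) (F : I -> T) (i0 : I) :
  exists i, \big[Order.min/F i0]_i F i = F i.
Proof.
apply: (big_ind (fun v => exists i, v = F i)); first by exists i0.
  by move=> _ _ [i ->] [i' ->]; rewrite /Order.min; case: ifP; [exists i|exists i'].
by move=> i _; exists i.
Qed.

Section OffsetCounts.
Variable R : realType.
Notation pt := (R * R)%type.

Lemma lattice_count_offset_plus_le (P : set pt) (w : R) (c : pt) :
  0 < w <= diam P -> offset_minus P w c ->
  finite_set (lattice_points (offset_plus P (w / 2))) /\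
  (lattice_count (offset_plus P (w / 2))
     <= (Num.truncn (2 * (diam P - w / 2))).+1 ^ 2)%N.
Proof.
move=> wP Pwc; apply: (lattice_count_square_le (c := c)) => [|p].
  by case/andP: wP => w0 wd; lra.
exact: offset_plus_sub_square.
Qed.

(* Any factor in [(1, 3 / (2 * sqrt 2))] would do instead of [21/20]; this one
   is large enough for [truncn_squares_ratio]. *)
Lemma lattice_count_cap_offset_plus_ge (I : Type) (P : I -> set pt)
    (w : I -> R) (c : pt) (x : R) :
  0 < x -> (forall i, x <= w i) -> (forall i, offset_minus (P i) (w i) c) ->
  finite_set (lattice_points (\bigcap_i offset_plus (P i) (w i / 2))) ->
  (Num.truncn (2 * (21 / 20 * x)) ^ 2
     <= lattice_count (\bigcap_i offset_plus (P i) (w i / 2)))%N.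
Proof.
move=> x0 xw Pwc finQ; apply: (lattice_count_square_ge (c := c)) => // [|p p1 p2 i _].
  by rewrite mulr_ge0 // ltW.
have wi0 : 0 < w i := lt_le_trans x0 (xw i).
apply: offset_plus_near (Pwc i) _ => //.
by apply: dist_lt_of_square p1 p2 _; [lra | have := xw i; nra].
Qed.

End OffsetCounts.

Theorem lemma15 (R : realType) (phi : R) (k : nat)
  (P : 'I_k.+1 -> set (R * R)) (j : 'I_k.+1) :
  0 < phi -> phi <= 1 ->
  (forall i, is_polygon (P i)) ->
  (forall i, (lattice_count (offset_plus (P j) (phi * diam (P j) / 2))
              <= lattice_count (offset_plus (P i) (phi * diam (P i) / 2)))%N) ->
  \bigcap_i offset_minus (P i) (phi * diam (P i)) !=set0 ->
  Num.sqrt 8 < phi * \big[Order.min/diam (P ord0)]_(i < k.+1) diam (P i) ->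
  let Pmin := lattice_count (offset_plus (P j) (phi * diam (P j) / 2)) in
  let capQ := lattice_count (\bigcap_i offset_plus (P i) (phi * diam (P i) / 2)) in
  phi ^+ 2 / 2 * Pmin%:R <= capQ%:R /\ (capQ <= Pmin)%N.
Proof.
move=> phi0 phi1 _ Pj_min [c Pwc] dmin_gt Pmin capQ.
set dm := \big[Order.min/_]_(i < k.+1) _ in dmin_gt.
have [i0 dm_i0] : exists i0, dm = diam (P i0) := bigmin_attained _ _.
have x_gt : 14 / 5 < phi * dm := lt_trans (sqrt8_gt R) dmin_gt.
have dm0 : 0 < dm by rewrite -(pmulr_rgt0 _ phi0); lra.
have dm_le i : dm <= diam (P i) := bigmin_le _ _ _.
have wP i : 0 < phi * diam (P i) <= diam (P i).
  have di0 : 0 < diam (P i) := lt_le_trans dm0 (dm_le i).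
  by rewrite mulr_gt0 ?ler_piMl // ltW.
have [finj _] := lattice_count_offset_plus_le (wP j) (Pwc j I).
have finQ : finite_set (lattice_points
    (\bigcap_i offset_plus (P i) (phi * diam (P i) / 2))).
  by apply: sub_finite_set finj => z /(_ j I).
split; last by apply: lattice_count_le_subset finj _ => p /(_ j I).
apply: (ratio_of_square_bounds _ x_gt); first by rewrite phi0 phi1.
  have [_ Pi0_le] := lattice_count_offset_plus_le (wP i0) (Pwc i0 I).
  by rewrite dm_i0; apply: leq_trans (Pj_min i0) Pi0_le.
apply: lattice_count_cap_offset_plus_ge (Pwc^~ I) finQ; first exact: mulr_gt0.
by move=> i; rewrite ler_pM2l ?dm_le.
Qed.
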